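(* There exists a constant $C\ge1$ depending only on $\mathbf A$ such that for every $B\in\mathbf B_{\mathrm o}$ and every $A\in\mathbf S$ there exist $c>0$, $t\in\mathbb R$ and $M\in\mathbf B_{\mathrm o}$ whose rows span $A^*V_B$ such that $\varphi_{BA}(x)=c\,\varphi_M(x)+t$ for all $x\in\mathbb R^2_{>0}$, and $$C^{-1}\frac{\|A^*u_{A,B}\|}{\|A^*r_{B,2}\|}\le c\le C\frac{\|A^*u_{A,B}\|}{\|A^*r_{B,2}\|}.$$
   Context: $\mathbf A\subset\mathrm{SL}(3,\mathbb R)_{>0}$ is finite (determinant one, positive entries) and $\mathbf S$ is the semigroup it generates. For $M\in\mathrm{Mat}_{2,3}(\mathbb R)$ with rows $r_{M,1},r_{M,2}$ and $x\in\mathbb R^2$, $\tilde x=(x_1,x_2,1)$ and $\varphi_M(x)=\langle r_{M,1},\tilde x\rangle/\langle r_{M,2},\tilde x\rangle$. $\mathbf B_{\mathrm o}$ is the set of $2\times3$ real matrices with orthonormal rows whose second row has nonnegative coordinates; $V_B$ is the row span of $B$. $A^*$ is the transpose. $u_{A,B}$ is the unique (up to sign) unit vector in $V_B$ with $A^*u_{A,B}\perp A^*r_{B,2}$. *)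

From HB Require Import structures.
From mathcomp Require Import all_boot all_order all_algebra.
From mathcomp Require Import reals.
Set Implicit Arguments. Unset Strict Implicit. Unset Printing Implicit Defensive.
Import Order.TTheory GRing.Theory Num.Theory.
Local Open Scope ring_scope.

Section Defs.
Variable R : realType.

Definition dot3 (u v : 'rV[R]_3) : R := \sum_(j < 3) u 0 j * v 0 j.
Definition norm3 (u : 'rV[R]_3) : R := Num.sqrt (dot3 u u).

Definition posSL3 (A : 'M[R]_3) : Prop :=
  \det A = 1 /\ forall i j, 0 < A i j.

Inductive semigroup_gen (As : seq 'M[R]_3) : 'M[R]_3 -> Prop :=
  | sg_base A : A \in As -> semigroup_gen As A
  | sg_mul A A' : semigroup_gen As A -> semigroup_gen As A' ->
                  semigroup_gen As (A *m A').

Definition r1 (M : 'M[R]_(2,3)) : 'rV[R]_3 := row ord0 M.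
Definition r2 (M : 'M[R]_(2,3)) : 'rV[R]_3 := row ord_max M.

Definition in_Bo (B : 'M[R]_(2,3)) : Prop :=
  B *m B^T = 1%:M /\ forall j, 0 <= r2 B 0 j.

Definition xtilde (x : 'rV[R]_2) : 'rV[R]_3 :=
  \row_(j < 3) [:: x 0 0; x 0 ord_max; 1]`_j.

Definition phi (M : 'M[R]_(2,3)) (x : 'rV[R]_2) : R :=
  dot3 (r1 M) (xtilde x) / dot3 (r2 M) (xtilde x).

End Defs.

From HB Require Import structures.
From mathcomp Require Import all_boot all_order all_algebra.
From mathcomp Require Import reals.
From mathcomp Require Import ring lra.
Set Implicit Arguments. Unset Strict Implicit. Unset Printing Implicit Defensive.
Import Order.TTheory GRing.Theory Num.Theory.
Local Open Scope ring_scope.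

(* Write N = B A, with rows q = A^* r_{B,1} and p = A^* r_{B,2}.  Gram-Schmidt
   gives w = q - t p with t = <q,p>/<p,p> and the orthonormal matrix M with rows
   w/|w| and p/|p|; it spans A^* V_B and phi_{BA} = c phi_M + t with c = |w|/|p|.
   A unit u = a r_{B,1} + d r_{B,2} with A^* u orthogonal to p has d = -a t, so
   A^* u = a w, a^2 (1 + t^2) = 1 and the ratio in the statement is |a| c.
   If K bounds the ratio of two entries in a column of every generator, this
   bound passes to all of S (right multiplication by a positive matrix keeps it),
   which makes p_k >= A_ik / K and hence |q_k| <= 3 K p_k and |t| <= 3 K.
   Thus 1/(1 + 3K) <= |a| <= 1, and C = 1 + 3K works. *)

Definition col_ratio_le {R : numDomainType} {n : nat} (K : R) (A : 'M[R]_n) :=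
  forall i j k, A i k <= K * A j k.

Lemma col_ratio_le_mulmx (R : numDomainType) n (K : R) (A1 A2 : 'M[R]_n) :
  col_ratio_le K A1 -> (forall i j, 0 <= A2 i j) -> col_ratio_le K (A1 *m A2).
Proof.
move=> A1K A2_ge0 i j k; rewrite !mxE mulr_sumr; apply: ler_sum => l _.
by rewrite mulrA ler_wpM2r.
Qed.

Lemma exists_col_ratio_le (R : realFieldType) n (As : seq 'M[R]_n) :
  (forall A, A \in As -> forall i j, 0 < A i j) ->
  exists K, 1 <= K /\ forall A, A \in As -> col_ratio_le K A.
Proof.
move=> As_gt0.
pose ratio (A : 'M[R]_n) (t : 'I_n * 'I_n * 'I_n) := A t.1.1 t.2 / A t.1.2 t.2.
exists (\big[Order.max/1]_(A <- As) \big[Order.max/1]_t ratio A t).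
split=> [|A A_As i j k]; first exact: bigmax_ge_id.
rewrite -ler_pdivrMr ?As_gt0 //.
apply: (bigmax_sup_seq _ _ _ _ _ A_As) => //.
exact: (le_bigmax _ (ratio A) (i, j, k)).
Qed.

Lemma sumr_ord_gt0 (R : numDomainType) n (F : 'I_n.+1 -> R) :
  (forall j, 0 < F j) -> 0 < \sum_j F j.
Proof.
move=> F_gt0; rewrite (bigD1 ord0) //=.
by apply: ltr_pwDl (F_gt0 _) _; apply: sumr_ge0 => j _; exact/ltW.
Qed.

Lemma posSL3_mulmx (R : realType) (A1 A2 : 'M[R]_3) :
  posSL3 A1 -> posSL3 A2 -> posSL3 (A1 *m A2).
Proof.
move=> [det1 A1_gt0] [det2 A2_gt0].
split; first by rewrite det_mulmx det1 det2 mulr1.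
by move=> i j; rewrite mxE; apply: sumr_ord_gt0 => l; exact: mulr_gt0.
Qed.

Lemma semigroup_gen_col_ratio (R : realType) (As : seq 'M[R]_3) (K : R) A :
  (forall A, A \in As -> posSL3 A) -> (forall A, A \in As -> col_ratio_le K A) ->
  semigroup_gen As A -> posSL3 A /\ col_ratio_le K A.
Proof.
move=> As_pos AsK; elim=> [A0 A0_As | A1 A2 _ [pos1 A1K] _ [pos2 _]].
  by split; [exact: As_pos | exact: AsK].
split; first exact: posSL3_mulmx.
by apply: col_ratio_le_mulmx A1K _ => i j; exact/ltW/pos2.2.
Qed.

Lemma scale_bounds (R : realFieldType) (a s L : R) : 0 <= a ->
  a ^+ 2 * (1 + s ^+ 2) = 1 -> `|s| <= L -> 1 <= (1 + L) * a /\ a <= 1.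
Proof.
move=> a_ge0 as1 sL; have L_ge0 := le_trans (normr_ge0 s) sL.
have s_le : s ^+ 2 <= L ^+ 2.
  by rewrite -real_normK ?num_real //; have := normr_ge0 s; nra.
have a2_le1 : a ^+ 2 <= 1 by rewrite -as1 ler_peMr ?sqr_ge0 // lerDl sqr_ge0.
have La2_ge1 : 1 <= ((1 + L) * a) ^+ 2.
  by rewrite -{1}as1 exprMn mulrC ler_wpM2r ?sqr_ge0 //; nra.
have La_ge0 : 0 <= (1 + L) * a by rewrite mulr_ge0 // addr_ge0.
split; nra.
Qed.

Section Dot.
Variable R : realType.
Implicit Types (u v w : 'rV[R]_3) (a : R).

Lemma dot3C u v : dot3 u v = dot3 v u.
Proof. by apply: eq_bigr => j _; rewrite mulrC. Qed.

Lemma dot3Dl u v w : dot3 (u + v) w = dot3 u w + dot3 v w.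
Proof. by rewrite /dot3 -big_split; apply: eq_bigr => j _; rewrite mxE mulrDl. Qed.

Lemma dot3Dr u v w : dot3 u (v + w) = dot3 u v + dot3 u w.
Proof. by rewrite dot3C dot3Dl !(dot3C u). Qed.

Lemma dot3Bl u v w : dot3 (u - v) w = dot3 u w - dot3 v w.
Proof. by rewrite /dot3 -sumrB; apply: eq_bigr => j _; rewrite !mxE mulrBl. Qed.

Lemma dot3Zl a u v : dot3 (a *: u) v = a * dot3 u v.
Proof. by rewrite /dot3 mulr_sumr; apply: eq_bigr => j _; rewrite mxE mulrA. Qed.

Lemma dot3Zr a u v : dot3 u (a *: v) = a * dot3 u v.
Proof. by rewrite dot3C dot3Zl dot3C. Qed.

Lemma dot3_ge0 u : 0 <= dot3 u u.
Proof. by apply: sumr_ge0 => j _; rewrite -expr2 sqr_ge0. Qed.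

Lemma dot3_gt0 u : u != 0 -> 0 < dot3 u u.
Proof.
move=> u_neq0; rewrite lt_def dot3_ge0 andbT.
rewrite psumr_neq0 => [|j _]; last by rewrite -expr2 sqr_ge0.
apply: contraNT u_neq0 => /hasPn u0; apply/eqP/rowP => j.
have := u0 j (mem_index_enum j); rewrite -expr2 lt_def sqr_ge0 sqrf_eq0 andbT.
by rewrite mxE => /negbNE/eqP.
Qed.

Lemma sqr_norm3 u : norm3 u ^+ 2 = dot3 u u.
Proof. exact/sqr_sqrtr/dot3_ge0. Qed.

Lemma norm3_gt0 u : u != 0 -> 0 < norm3 u.
Proof. by move=> /dot3_gt0; rewrite sqrtr_gt0. Qed.

Lemma norm3Z a u : norm3 (a *: u) = `|a| * norm3 u.
Proof. by rewrite /norm3 dot3Zl dot3Zr mulrA -expr2 sqrtrM ?sqr_ge0 // sqrtr_sqr. Qed.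

Lemma unit_dot3_entry_le1 u j : dot3 u u = 1 -> `|u 0 j| <= 1.
Proof.
move=> u1; have : `|u 0 j| ^+ 2 <= 1.
  rewrite -u1 real_normK ?num_real // /dot3 (bigD1 j) //= expr2 lerDl.
  by apply: sumr_ge0 => k _; rewrite -expr2 sqr_ge0.
have := normr_ge0 (u 0 j); nra.
Qed.

Lemma unit_dot3_sum_ge1 u : (forall j, 0 <= u 0 j) -> dot3 u u = 1 ->
  1 <= \sum_j u 0 j.
Proof.
move=> u_ge0 u1; rewrite -{1}u1; apply: ler_sum => j _.
have := unit_dot3_entry_le1 j u1; rewrite ger0_norm //.
by have := u_ge0 j; nra.
Qed.

Lemma dot3_xtilde_gt0 v (x : 'rV[R]_2) :
  (forall k, 0 < v 0 k) -> (forall i, 0 < x 0 i) -> 0 < dot3 v (xtilde x).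
Proof.
move=> v_gt0 x_gt0; apply: sumr_ord_gt0 => j; apply: mulr_gt0 => //.
by case: j => [[|[|[|//]]] ?]; rewrite mxE /=.
Qed.

Lemma dot3_normalize u : u != 0 ->
  dot3 ((norm3 u)^-1 *: u) ((norm3 u)^-1 *: u) = 1.
Proof.
move=> u_neq0; rewrite dot3Zl dot3Zr mulrA -expr2 exprVn sqr_norm3.
by rewrite mulVf // gt_eqF // dot3_gt0.
Qed.

End Dot.

Lemma row_free_row_neq0 (F : fieldType) m n (A : 'M[F]_(m, n)) i :
  row_free A -> row i A != 0.
Proof.
move=> A_free; rewrite rowE mulmx_free_eq0 //.
by apply/eqP => /matrixP/(_ 0 i); rewrite !mxE !eqxx /= => /eqP; rewrite oner_eq0.
Qed.

Section Rows.
Variable R : realType.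

Lemma ord2_cases (i : 'I_2) : i = ord0 \/ i = ord_max.
Proof. by case: i => [[|[|//]] ?]; [left | right]; apply: val_inj. Qed.

Lemma mul_row2 (D : 'rV[R]_2) (X : 'M[R]_(2,3)) :
  D *m X = D 0 ord0 *: r1 X + D 0 ord_max *: r2 X.
Proof.
rewrite mulmx_sum_row big_ord_recl big_ord1.
by have -> : lift ord0 ord0 = ord_max :> 'I_2 by apply: val_inj.
Qed.

Lemma mulmx_tr_entry (M : 'M[R]_(2,3)) i j :
  (M *m M^T) i j = dot3 (row i M) (row j M).
Proof. by rewrite !mxE; apply: eq_bigr => k _; rewrite !mxE. Qed.

Lemma orthonormal_rowsP (M : 'M[R]_(2,3)) :
  M *m M^T = 1%:M <->
  [/\ dot3 (r1 M) (r1 M) = 1, dot3 (r1 M) (r2 M) = 0 & dot3 (r2 M) (r2 M) = 1].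
Proof.
split=> [MMt | [o11 o12 o22]].
  by split; rewrite -mulmx_tr_entry MMt mxE.
apply/matrixP => i j; rewrite mulmx_tr_entry mxE.
have [->|->] := ord2_cases i; have [->|->] := ord2_cases j => //=.
by rewrite dot3C.
Qed.

Lemma orthonormal_row_free (M : 'M[R]_(2,3)) : M *m M^T = 1%:M -> row_free M.
Proof. by move=> MMt; apply/row_freeP; exists M^T. Qed.

End Rows.

Section GramSchmidt.
Variable R : realType.
Implicit Types N : 'M[R]_(2,3).

Definition gs_coef N := dot3 (r1 N) (r2 N) / dot3 (r2 N) (r2 N).
Definition gs_perp N := r1 N - gs_coef N *: r2 N.
Definition gs_scale N := norm3 (gs_perp N) / norm3 (r2 N).
Definition gs_orth N : 'M[R]_(2,3) :=
  \matrix_(i < 2) if i == ord0 then (norm3 (gs_perp N))^-1 *: gs_perp N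
                  else (norm3 (r2 N))^-1 *: r2 N.

Lemma r1_gs_orth N : r1 (gs_orth N) = (norm3 (gs_perp N))^-1 *: gs_perp N.
Proof. by rewrite /r1 rowK. Qed.

Lemma r2_gs_orth N : r2 (gs_orth N) = (norm3 (r2 N))^-1 *: r2 N.
Proof. by rewrite /r2 rowK. Qed.

Lemma gs_perpE N :
  gs_perp N = (delta_mx 0 ord0 - gs_coef N *: delta_mx 0 ord_max) *m N.
Proof. by rewrite mulmxBl -scalemxAl -!rowE. Qed.

Variable N : 'M[R]_(2,3).
Hypothesis N_free : row_free N.

Lemma r2_neq0 : r2 N != 0.
Proof. exact: row_free_row_neq0. Qed.

Lemma gs_perp_neq0 : gs_perp N != 0.
Proof.
rewrite gs_perpE mulmx_free_eq0 //; apply/eqP => /matrixP/(_ 0 ord0).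
by rewrite !mxE !eqxx /= mulr0 subr0 => /eqP; rewrite oner_eq0.
Qed.

Lemma gs_perp_orth : dot3 (gs_perp N) (r2 N) = 0.
Proof.
by rewrite dot3Bl dot3Zl /gs_coef mulfVK ?subrr // gt_eqF // dot3_gt0 // r2_neq0.
Qed.

Lemma gs_scale_gt0 : 0 < gs_scale N.
Proof. by rewrite divr_gt0 // norm3_gt0 ?gs_perp_neq0 ?r2_neq0. Qed.

Lemma gs_orth_orthonormal : gs_orth N *m (gs_orth N)^T = 1%:M.
Proof.
apply/orthonormal_rowsP; rewrite r1_gs_orth r2_gs_orth.
rewrite !dot3_normalize ?gs_perp_neq0 ?r2_neq0 //.
by rewrite dot3Zl dot3Zr gs_perp_orth !mulr0.
Qed.

Lemma gs_orth_eqmx : (gs_orth N == N)%MS.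
Proof.
have sub : (gs_orth N <= N)%MS.
  apply/row_subP => i; rewrite rowK; case: ifP => _; apply: scalemx_sub.
    by rewrite gs_perpE submxMl.
  exact: row_sub.
rewrite -(geq_leqif (mxrank_leqif_eq sub)).
by rewrite (eqP N_free) (eqP (orthonormal_row_free gs_orth_orthonormal)).
Qed.

Lemma phi_gs_orth x : dot3 (r2 N) (xtilde x) != 0 ->
  phi N x = gs_scale N * phi (gs_orth N) x + gs_coef N.
Proof.
move=> px_neq0; rewrite /phi r1_gs_orth r2_gs_orth !dot3Zl /gs_perp dot3Bl dot3Zl.
have := norm3_gt0 gs_perp_neq0; have := norm3_gt0 r2_neq0.
rewrite /gs_scale => /lt0r_neq0 p_neq0 /lt0r_neq0 w_neq0; field.
by rewrite p_neq0 w_neq0 px_neq0.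
Qed.

Lemma gs_coef_norm_le L : (forall k, 0 <= r2 N 0 k) ->
  (forall k, `|r1 N 0 k| <= L * r2 N 0 k) -> `|gs_coef N| <= L.
Proof.
move=> p_ge0 qL; have P_gt0 := dot3_gt0 r2_neq0.
rewrite /gs_coef normrM normfV (gtr0_norm P_gt0) ler_pdivrMr //.
apply: (le_trans (ler_norm_sum _ _ _)); rewrite /dot3 mulr_sumr.
apply: ler_sum => k _; rewrite normrM (ger0_norm (p_ge0 k)) mulrA.
exact: ler_wpM2r.
Qed.

End GramSchmidt.

Section UnitImage.
Variables (R : realType) (B : 'M[R]_(2,3)) (A : 'M[R]_3).
Local Notation N := (B *m A).
Hypotheses (B_orth : B *m B^T = 1%:M) (N_free : row_free N).

Lemma dot3_mul_orthonormal (D : 'rV[R]_2) :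
  dot3 (D *m B) (D *m B) = D 0 ord0 ^+ 2 + D 0 ord_max ^+ 2.
Proof.
have [o11 o12 o22] := (orthonormal_rowsP B).1 B_orth.
rewrite mul_row2 !(dot3Dl, dot3Dr, dot3Zl, dot3Zr) o11 o22 (dot3C (r2 B)) o12.
ring.
Qed.

Lemma norm_perp_image u : (u <= B)%MS -> norm3 u = 1 ->
  dot3 (u *m A) (r2 N) = 0 ->
  exists2 a, 0 <= a /\ a ^+ 2 * (1 + gs_coef N ^+ 2) = 1 &
    norm3 (u *m A) = a * norm3 (gs_perp N).
Proof.
move=> /submxP[D ->] u1 uA_orth.
have ad1 : D 0 ord0 ^+ 2 + D 0 ord_max ^+ 2 = 1.
  by rewrite -dot3_mul_orthonormal -sqr_norm3 u1 expr1n.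
have uA : D *m B *m A = D 0 ord0 *: r1 N + D 0 ord_max *: r2 N.
  by rewrite -mulmxA mul_row2.
have d_eq : D 0 ord_max = - (D 0 ord0 * gs_coef N).
  have P_neq0 := lt0r_neq0 (dot3_gt0 (r2_neq0 N_free)).
  have : (D 0 ord_max + D 0 ord0 * gs_coef N) * dot3 (r2 N) (r2 N) = 0.
    by rewrite -uA_orth uA dot3Dl !dot3Zl /gs_coef; field.
  by move/eqP; rewrite mulf_eq0 (negbTE P_neq0) orbF addr_eq0 => /eqP.
exists `|D 0 ord0|.
  split; first exact: normr_ge0.
  by rewrite real_normK ?num_real // -[RHS]ad1 d_eq; ring.
by rewrite uA d_eq scaleNr -scalerA -scalerBr norm3Z.
Qed.

End UnitImage.

Section PositiveImage.
Variables (R : realType) (K : R) (B : 'M[R]_(2,3)) (A : 'M[R]_3).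
Hypotheses (B_Bo : in_Bo B) (A_gt0 : forall i j, 0 < A i j) (AK : col_ratio_le K A).

Lemma r2_mulmxE k : r2 (B *m A) 0 k = \sum_j r2 B 0 j * A j k.
Proof. by rewrite /r2 row_mul mxE. Qed.

Lemma col_le_r2 i k : A i k <= K * r2 (B *m A) 0 k.
Proof.
have [/orthonormal_rowsP[_ _ o22] b2_ge0] := B_Bo.
apply: (le_trans (ler_peMr (ltW (A_gt0 i k)) (unit_dot3_sum_ge1 b2_ge0 o22))).
rewrite r2_mulmxE !mulr_sumr; apply: ler_sum => j _.
by rewrite mulrC mulrCA; apply: ler_wpM2l.
Qed.

Lemma r2_mulmx_gt0 k : 0 < r2 (B *m A) 0 k.
Proof.
have p_ge0 : 0 <= r2 (B *m A) 0 k.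
  by rewrite r2_mulmxE; apply: sumr_ge0 => j _; rewrite mulr_ge0 ?B_Bo.2 ?ltW.
rewrite lt_def p_ge0 andbT; apply: contraTneq (col_le_r2 0 k) => ->.
by rewrite mulr0 -ltNge.
Qed.

Lemma r1_mulmx_le k : `|r1 (B *m A) 0 k| <= 3 * K * r2 (B *m A) 0 k.
Proof.
have [/orthonormal_rowsP[o11 _ _] _] := B_Bo.
rewrite /r1 row_mul mxE; apply: (le_trans (ler_norm_sum _ _ _)).
apply: (@le_trans _ _ (\sum_(j < 3) K * r2 (B *m A) 0 k)).
  apply: ler_sum => j _; rewrite normrM (gtr0_norm (A_gt0 _ _)).
  apply: le_trans (col_le_r2 j k).
  exact: ler_piMl (ltW (A_gt0 j k)) (unit_dot3_entry_le1 j o11).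
by rewrite sumr_const card_ord mulr_natl mulrnAl.
Qed.

End PositiveImage.

Theorem lemma3p2 (R : realType) (As : seq 'M[R]_3)
  (HAs : forall A, A \in As -> posSL3 A) :
  exists C : R, 1 <= C /\
    forall (B : 'M[R]_(2,3)) (A : 'M[R]_3),
      in_Bo B -> semigroup_gen As A ->
      exists (c t : R) (M : 'M[R]_(2,3)),
        [/\ 0 < c, in_Bo M, (M == B *m A)%MS,
         (forall x : 'rV[R]_2, (forall i, 0 < x 0 i) ->
            phi (B *m A) x = c * phi M x + t) &
         (forall u : 'rV[R]_3,
            (u <= B)%MS -> norm3 u = 1 ->
            dot3 (u *m A) (r2 B *m A) = 0 ->
            C^-1 * (norm3 (u *m A) / norm3 (r2 B *m A)) <= c /\
            c <= C * (norm3 (u *m A) / norm3 (r2 B *m A)))].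
Proof.
have [K [K_ge1 AsK]] := exists_col_ratio_le (fun A A_As => (HAs A A_As).2).
exists (1 + 3 * K); split=> [|B A B_Bo A_S]; first lra.
have [[detA A_gt0] AK] := semigroup_gen_col_ratio HAs AsK A_S.
have N_free : row_free (B *m A).
  apply/row_freeP; exists (invmx A *m B^T).
  by rewrite mulmxA mulmxK ?B_Bo.1 // unitmxE detA unitr1.
have p_gt0 := r2_mulmx_gt0 B_Bo A_gt0 AK.
have c_gt0 := gs_scale_gt0 N_free.
exists (gs_scale (B *m A)), (gs_coef (B *m A)), (gs_orth (B *m A)); split.
- exact: c_gt0.
- split=> [|j]; first exact: gs_orth_orthonormal.
  by rewrite r2_gs_orth mxE mulr_ge0 ?invr_ge0 ?sqrtr_ge0 // ltW.
- exact: gs_orth_eqmx.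
- move=> x x_gt0; apply: phi_gs_orth => //.
  exact/lt0r_neq0/dot3_xtilde_gt0.
have -> : r2 B *m A = r2 (B *m A) by rewrite /r2 row_mul.
move=> u uB u1 uA_orth.
have [a [a_ge0 as1] ->] := norm_perp_image B_Bo.1 N_free uB u1 uA_orth.
have [a_lb a_ub] := scale_bounds a_ge0 as1
  (gs_coef_norm_le N_free (fun k => ltW (p_gt0 k)) (r1_mulmx_le B_Bo A_gt0 AK)).
rewrite -mulrA -/(gs_scale _) mulrC ler_pdivrMr; last lra.
split; nra.
Qed.
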